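(* Let $S$ be a set and let $m:\mathcal{L}\to S$ and $M_1:S\times\Sigma\to\{1,-1,r\}$ be computable functions such that for all $\sigma\in\mathcal{L}$ and $s\in\Sigma$: $M_1(m(\sigma),s)=1$ if $\sigma$ determines $s$ with value $1$; $M_1(m(\sigma),s)=-1$ if $\sigma$ determines $s$ with value $-1$; and $M_1(m(\sigma),s)=r$ if $\sigma$ does not determine $s$. (That is, $\langle M,M_0,M_1,S\rangle$ with $M_0(\sigma,s)=(m(\sigma),s)$ and $M=M_1\circ M_0$ is a Memory-factoring Abstract Generating Automaton for $\mathcal{L}$.) Then $|S|\ge 24$.
   Context: Let $\Sigma=\{A,B,C,a,b,c,\alpha,\beta,\gamma\}$ be nine observables arranged in a $3\times 3$ square with rows $(A,B,C)$, $(a,b,c)$, $(\alpha,\beta,\gamma)$. The six \emph{contexts} are the three rows $\{A,B,C\},\{a,b,c\},\{\alpha,\beta,\gamma\}$ and the three columns $\{A,a,\alpha\},\{B,b,\beta\},\{C,c,\gamma\}$. Each context has a sign: $-1$ for $\{C,c,\gamma\}$ and $+1$ for the other five. Two distinct observables are \emph{compatible} if they lie in a common context, and \emph{incompatible} otherwise. Let $\tilde\Sigma=\{X,\tilde X: X\in\Sigma\}$ (18 letters); the letter $X$ means ''observable $X$ measured with value $1$'' and $\tilde X$ means ''$X$ measured with value $-1$''. For a word $w=t_1\cdots t_m\in\tilde\Sigma^*$ define inductively partial assignments $v_0,\dots,v_m:\Sigma\rightharpoonup\{1,-1\}$ (an observable in $\mathrm{dom}(v_i)$ is \emph{determined} after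 step $i$, with value $v_i(X)$), and whether $w$ is consistent: $v_0$ is the empty assignment. Given $v_{i-1}$, let $t_i$ record observable $X$ with value $\varepsilon$. If $X\in\mathrm{dom}(v_{i-1})$ and $v_{i-1}(X)\ne\varepsilon$, then $w$ is \emph{inconsistent}. Otherwise let $u$ be the restriction of $v_{i-1}$ to observables that are equal to or compatible with $X$, extended by $u(X)=\varepsilon$; then $v_i$ is obtained from $u$ by repeatedly doing the following until nothing changes: whenever a context has exactly two of its observables in the domain, assign the third observable the value making the product of the three values equal to the sign of that context. The word $w$ is \emph{consistent} if no step is inconsistent; $\mathcal{L}$ is the set of consistent words (it contains the empty word). For $w\in\mathcal{L}$ of length $m$: $w$ \emph{determines} an observable $s$ with value $v$ if $v_m(s)=v$, and $w$ does not determine $s$ if $s\notin\mathrm{dom}(v_m)$. The symbol $r$ is a third output value meaning ''random/undetermined''. *)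

From HB Require Import structures.
From mathcomp Require Import all_boot.
Set Implicit Arguments. Unset Strict Implicit. Unset Printing Implicit Defensive.

(* The nine observables of the 3x3 square, rows (A,B,C),(a,b,c),(al,be,ga). *)
Inductive obs := oA | oB | oC | oa | ob | oc | oal | obe | oga.

Definition obs_idx (x : obs) : nat :=
  match x with oA => 0 | oB => 1 | oC => 2 | oa => 3 | ob => 4 | oc => 5
  | oal => 6 | obe => 7 | oga => 8 end.

Definition obs_eqb (x y : obs) : bool := obs_idx x == obs_idx y.
Lemma obs_eqP : Equality.axiom obs_eqb.
Proof. by move=> [] []; constructor. Qed.
HB.instance Definition _ := hasDecEq.Build obs obs_eqP.

(* Measurement values: true encodes +1, false encodes -1.
   The product of two values is then boolean equality. *)
Definition vmul (x y : bool) : bool := x == y.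

Record context := Ctx { c1 : obs; c2 : obs; c3 : obs; csign : bool }.

Definition contexts : seq context :=
  [:: Ctx oA oB oC true; Ctx oa ob oc true; Ctx oal obe oga true;
      Ctx oA oa oal true; Ctx oB ob obe true; Ctx oC oc oga false].

Definition in_ctx (x : obs) (k : context) : bool :=
  (x == c1 k) || (x == c2 k) || (x == c3 k).

Definition compatible (x y : obs) : bool :=
  (x != y) && has (fun k => in_ctx x k && in_ctx y k) contexts.

Definition assign := obs -> option bool.
Definition empty_assign : assign := fun _ => None.
Definition upd (v : assign) (x : obs) (e : bool) : assign :=
  fun y => if y == x then Some e else v y.

(* If context k has exactly two of its observables determined, the value
   forced on the third (so that the product equals the sign). *)
Definition ctx_force (v : assign) (k : context) : option (obs * bool) :=
  match v (c1 k), v (c2 k), v (c3 k) with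
  | Some x, Some y, None => Some (c3 k, vmul (vmul x y) (csign k))
  | Some x, None, Some z => Some (c2 k, vmul (vmul x z) (csign k))
  | None, Some y, Some z => Some (c1 k, vmul (vmul y z) (csign k))
  | _, _, _ => None
  end.

Fixpoint prop_step_in (ks : seq context) (v : assign) : assign :=
  match ks with
  | [::] => v
  | k :: ks' =>
      match ctx_force v k with
      | Some (x, e) => upd v x e
      | None => prop_step_in ks' v
      end
  end.

Definition prop_step (v : assign) : assign := prop_step_in contexts v.

(* Repeating until nothing changes: each effective step enlarges the
   domain, so 9 iterations always reach the fixed point. *)
Definition closure (v : assign) : assign := iter 9 prop_step v.

Definition letter := (obs * bool)%type.

Definition step (v : assign) (t : letter) : option assign :=
  let: (x, e) := t in
  match v x with
  | Some e' => if e' == e then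
                 Some (closure (fun y => if y == x then Some e
                                         else if compatible x y then v y else None))
               else None
  | None => Some (closure (fun y => if y == x then Some e
                                    else if compatible x y then v y else None))
  end.

Definition run (w : seq letter) : option assign :=
  foldl (fun ov t => if ov is Some v then step v t else None)
        (Some empty_assign) w.

Definition consistent (w : seq letter) : bool := run w.

Definition L := {w : seq letter | consistent w}.

Definition final (w : seq letter) : assign := odflt empty_assign (run w).

Inductive outv := Out1 | OutM1 | OutR.

Definition out_of (o : option bool) : outv :=
  match o with Some true => Out1 | Some false => OutM1 | None => OutR end.

From mathcomp Require Import all_boot.

(* A memory-factoring automaton reads every observable of a
   word off its memory state, so two words with the same memory state have
   the same outcome profile (the map s |-> out_of (final w s)).  Hence it
   suffices to exhibit 24 consistent words with pairwise distinct profiles.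
   For each of the six contexts k and values e1, e2 take the word that
   measures the first observable of k with value e1 and then the second one
   with value e2.  The first measurement survives the second (the two are
   compatible), propagation fixes the third observable of k, and nothing
   else is determined: the word determines exactly the observables of k,
   the first two with values e1 and e2.  Since distinct contexts have
   distinct supports, the profile recovers (k, e1, e2). *)

Definition profile (w : seq letter) (s : obs) : outv := out_of (final w s).

Lemma out_of_inj : injective out_of.
Proof. by move=> [[]|] [[]|]. Qed.

Section MemoryFactoring.

Variables (S : Type) (m : L -> S) (M1 : S -> obs -> outv).
Hypothesis HM : forall (w : L) (s : obs), M1 (m w) s = out_of (final (sval w) s).

Lemma memory_determines_profile (w1 w2 : L) :
  m w1 = m w2 -> profile (sval w1) =1 profile (sval w2).
Proof. by move=> eq_m s; rewrite /profile -!HM eq_m. Qed.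

End MemoryFactoring.

Arguments memory_determines_profile {S m M1} HM {w1 w2}.

Definition ctx (k : 'I_6) : context := nth (Ctx oA oB oC true) contexts k.

Definition pair_word (k : 'I_6) (e1 e2 : bool) : seq letter :=
  [:: (c1 (ctx k), e1); (c2 (ctx k), e2)].

Lemma pair_word_consistent (k : 'I_6) (e1 e2 : bool) :
  consistent (pair_word k e1 e2).
Proof. by case: k => -[|[|[|[|[|[|//]]]]]] ?; case: e1; case: e2. Qed.

Lemma pair_word_domain (k : 'I_6) (e1 e2 : bool) (s : obs) :
  (final (pair_word k e1 e2) s != None) = in_ctx s (ctx k).
Proof.
by case: k => -[|[|[|[|[|[|//]]]]]] ?; case: e1; case: e2; case: s; vm_compute.
Qed.

Lemma pair_word_measured (k : 'I_6) (e1 e2 : bool) :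
  final (pair_word k e1 e2) (c1 (ctx k)) = Some e1 /\
  final (pair_word k e1 e2) (c2 (ctx k)) = Some e2.
Proof. by case: k => -[|[|[|[|[|[|//]]]]]] ?; case: e1; case: e2. Qed.

Lemma ctx_support_inj (k k' : 'I_6) :
  in_ctx^~ (ctx k) =1 in_ctx^~ (ctx k') -> k = k'.
Proof.
move=> eq_supp; apply: val_inj.
have := eq_supp oA; have := eq_supp oB; have := eq_supp oC; have := eq_supp oa.
have := eq_supp ob; have := eq_supp oal; clear eq_supp.
by case: k => -[|[|[|[|[|[|//]]]]]] ?; case: k' => -[|[|[|[|[|[|//]]]]]] ?; vm_compute.
Qed.

Lemma pair_word_profile_inj (k k' : 'I_6) (e1 e2 e1' e2' : bool) :
  profile (pair_word k e1 e2) =1 profile (pair_word k' e1' e2') ->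
  (k, e1, e2) = (k', e1', e2').
Proof.
rewrite /profile => eq_prof.
have eq_final s : final (pair_word k e1 e2) s = final (pair_word k' e1' e2') s.
  exact: out_of_inj (eq_prof s).
have eq_k : k = k'.
  apply: ctx_support_inj => s.
  by rewrite -(pair_word_domain k e1 e2) -(pair_word_domain k' e1' e2') eq_final.
subst k'; have [m1 m2] := pair_word_measured k e1 e2.
have [m1' m2'] := pair_word_measured k e1' e2'.
by move: m1 m2; rewrite !eq_final m1' m2' => -[->] [->].
Qed.

Lemma card_triples : #|{: 'I_6 * bool * bool}| = 24.
Proof. by rewrite !card_prod card_ord card_bool. Qed.

Definition triple (i : 'I_24) : 'I_6 * bool * bool :=
  enum_val (cast_ord (esym card_triples) i).

Lemma triple_inj : injective triple.
Proof. by move=> i j /enum_val_inj /cast_ord_inj. Qed.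

Definition witness (i : 'I_24) : L :=
  let: (k, e1, e2) := triple i in
  exist _ (pair_word k e1 e2) (pair_word_consistent k e1 e2).

Lemma witness_profile_inj (i j : 'I_24) :
  profile (sval (witness i)) =1 profile (sval (witness j)) -> i = j.
Proof.
rewrite /witness => eq_prof; apply: triple_inj.
by move: eq_prof; case: (triple i) => [[k e1] e2]; case: (triple j) => [[k' e1'] e2'];
  apply: pair_word_profile_inj.
Qed.

Theorem mainTheorem7 (S : Type) (m : L -> S) (M1 : S -> obs -> outv)
  (HM : forall (w : L) (s : obs), M1 (m w) s = out_of (final (sval w) s)) :
  exists f : 'I_24 -> S, injective f.
Proof.
exists (fun i => m (witness i)) => i j eq_m.
exact: witness_profile_inj (memory_determines_profile HM eq_m).
Qed.
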